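(* Uniformly in real $y \geq 1$ and positive integers $k$, \[ \sum_{\substack{d \leq y\\ (d,k) = 1}} \frac{\mu(d)\,t(d)^2}{d} = 1+o(1), \qquad x \to \infty.\]
   Context: $\mu$ is the Möbius function. Let $x$ be large and $\lambda = \sqrt{\log x \log\log x}$. Define the multiplicative function $r$ by $r(p) = \frac{\lambda}{\sqrt{p}\log p}$ for primes $\lambda^2 \le p \le \exp((\log\lambda)^2)$, $r(p)=0$ for other primes, and $r(p^n)=0$ for $n\ge2$. Define the multiplicative function $t$ by $t(p^n) = \frac{r(p^n)}{1+r(p^n)^2}$. *)

From HB Require Import structures.
From mathcomp Require Import all_boot all_order all_algebra.
From mathcomp Require Import all_classical all_reals all_analysis.
Set Implicit Arguments. Unset Strict Implicit. Unset Printing Implicit Defensive.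
Import Order.TTheory GRing.Theory Num.Theory.
Local Open Scope ring_scope.

Definition squarefree (n : nat) : bool :=
  (0 < n)%N && all (fun p => logn p n == 1)%N (primes n).

Definition moebius {R : ringType} (n : nat) : R :=
  if squarefree n then (-1) ^+ size (primes n) else 0.

(* The multiplicative function (on n >= 1) determined by its values
   f p e on prime powers p^e (e >= 1). *)
Definition multfun {R : ringType} (f : nat -> nat -> R) (n : nat) : R :=
  \prod_(p <- primes n) f p (logn p n).

Section Params.
Variable R : realType.

Definition lam (x : R) : R := Num.sqrt (ln x * ln (ln x)).

Definition r_pp (x : R) (p e : nat) : R :=
  if (e == 1)%N && (lam x ^+ 2 <= p%:R) && (p%:R <= expR ((ln (lam x)) ^+ 2))
  then lam x / (Num.sqrt p%:R * ln p%:R) else 0.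

Definition t_pp (x : R) (p e : nat) : R :=
  r_pp x p e / (1 + r_pp x p e ^+ 2).

Definition r_fun (x : R) (n : nat) : R := multfun (r_pp x) n.
Definition t_fun (x : R) (n : nat) : R := multfun (t_pp x) n.

Definition Ssum (x y : R) (k : nat) : R :=
  \sum_(1 <= d < (Num.truncn y).+1 | coprime d k)
     moebius d * t_fun x d ^+ 2 / d%:R.
End Params.

(* Put b(n) = t(n)^2/n, with t evaluated as on primes ([t_weight]).  For
   squarefree d the term mu(d) t(d)^2/d has absolute value prod_(p | d) b(p),
   and the term d = 1 equals 1, so |S - 1| is at most the sum over squarefree
   d > 1, d <= y, of prod_(p | d) b(p), which is at most
   prod_(n <= y) (1 + b(n)) - 1 <= 2 sum_n b(n) once the sum is <= 1/2.
   Since t <= r and r(p) = 0 unless p >= lambda^2,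
   sum_n b(n) <= lambda^2 / log(lambda^2)^2 * sum_(n >= lambda^2) 1/n^2
             <= 2 / log(lambda^2)^2, which tends to 0 with x, uniformly in y, k. *)

From HB Require Import structures.
From mathcomp Require Import all_boot all_order all_algebra.
From mathcomp Require Import all_classical all_reals all_analysis.
From mathcomp Require Import ring lra.
Import Order.TTheory GRing.Theory Num.Theory.
Local Open Scope ring_scope.

Lemma squarefree_prod_primes n : squarefree n -> n = (\prod_(p <- primes n) p)%N.
Proof.
case/andP => n0 /allP logn1.
rewrite {1}(prod_prime_decomp n0) prime_decompE big_map /=.
by apply: eq_big_seq => p /logn1 /eqP ->; rewrite expn1.
Qed.

Lemma squarefree_eq_primes m n :
  squarefree m -> squarefree n -> primes m =i primes n -> m = n.
Proof.
move=> sqf_m sqf_n eq_mn.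
rewrite (squarefree_prod_primes m sqf_m) (squarefree_prod_primes n sqf_n).
suff -> : primes m = primes n by [].
by apply: (irr_sorted_eq ltn_trans) => //; [exact: ltnn|exact: sorted_primes..].
Qed.

Lemma mem_primes_ltn {N d p : nat} : (d < N)%N -> p \in primes d -> (p < N)%N.
Proof.
by move=> ltdN; rewrite mem_primes => /and3P [_ d0 /(dvdn_leq d0)/leq_ltn_trans->].
Qed.

Lemma big_ord_mem {R : Type} {idx : R} {op : Monoid.com_law idx} N
    (s : seq nat) (F : nat -> R) :
  uniq s -> all (fun p => p < N)%N s ->
  \big[op/idx]_(i < N | (i : nat) \in s) F i = \big[op/idx]_(p <- s) F p.
Proof.
move=> uniq_s /allP s_ltN.
rewrite -(big_mkord (fun i => i \in s)) -big_filter; apply: perm_big.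
apply: uniq_perm; rewrite ?filter_uniq ?iota_uniq // => p.
rewrite mem_filter mem_index_iota /=.
by case: (boolP (p \in s)) => // /s_ltN ->.
Qed.

Lemma big_mkord_from1 {R : Type} {idx : R} {op : R -> R -> R} n
    (P : pred nat) (F : nat -> R) :
  ~~ P 0 -> \big[op/idx]_(1 <= i < n | P i) F i = \big[op/idx]_(i < n | P i) F i.
Proof.
case: n => [|n] notP0; first by rewrite big_geq // big_ord0.
by rewrite -big_mkord [RHS]big_ltn_cond // ifN.
Qed.

Lemma prod1D_sum_subsets {R : comPzSemiRingType} {I : finType} (b : I -> R) :
  \prod_i (1 + b i) = \sum_(A : {set I}) \prod_(i in A) b i.
Proof.
have E i : 1 + b i = \sum_(j : bool) (if j then b i else 1).
  by rewrite big_bool addrC.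
rewrite (eq_bigr _ (fun i _ => E i)) bigA_distr_bigA /=.
rewrite (reindex (fun f : {ffun I -> bool} => [set i | f i])) /=; last first.
  exists (fun A : {set I} => [ffun i => i \in A]) => [f _ | A _].
    by apply/ffunP => i; rewrite ffunE inE.
  by apply/setP => i; rewrite !inE ffunE.
apply: eq_bigr => f _; rewrite [RHS]big_mkcond /=.
by apply: eq_bigr => i _; rewrite inE; case: (f i).
Qed.

Lemma sum_squarefree_prod_le {R : numDomainType} N (b : nat -> R) :
  (forall n, 0 <= b n) ->
  \sum_(1 <= d < N | squarefree d) \prod_(p <- primes d) b p
    <= \prod_(i < N) (1 + b i).
Proof.
move=> b_ge0.
pose primes_set (d : 'I_N) : {set 'I_N} := [set i : 'I_N | (i : nat) \in primes d].
pose sqf_set := [set d : 'I_N | squarefree d].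
have prod_primes_set (d : 'I_N) :
    \prod_(p <- primes d) b p = \prod_(i in primes_set d) b i.
  rewrite -(big_ord_mem N) ?primes_uniq //; last by apply/allP => p; apply: mem_primes_ltn.
  by apply: eq_bigl => i; rewrite inE.
have primes_set_inj : {in sqf_set &, injective primes_set}.
  move=> d e; rewrite !inE => sqf_d sqf_e /setP eq_de.
  apply/val_inj/squarefree_eq_primes => // p.
  case: (ltnP p N) => [ltpN | leNp]; first by have := eq_de (Ordinal ltpN); rewrite !inE.
  by apply/idP/idP => /(mem_primes_ltn (ltn_ord _)); rewrite ltnNge leNp.
rewrite big_mkord_from1 //.
under eq_bigr do rewrite prod_primes_set.
rewrite (eq_bigl (fun d => d \in sqf_set)); last by move=> d; rewrite inE.
rewrite -(@big_imset _ _ _ _ _ _ _ (fun A : {set 'I_N} => \prod_(i in A) b i) primes_set_inj).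
rewrite prod1D_sum_subsets [leRHS]big_mkcond [leLHS]big_mkcond /=.
by apply: ler_sum => A _; case: (A \in _) => //; apply: prodr_ge0.
Qed.

Lemma prod1D_mul_1Bsum_le1 {R : realDomainType} {I : Type} (r : seq I) (b : I -> R) :
  (forall i, 0 <= b i) -> \prod_(i <- r) (1 + b i) * (1 - \sum_(i <- r) b i) <= 1.
Proof.
move=> b_ge0; elim: r => [|i r IH]; first by rewrite !big_nil subr0 mulr1.
rewrite !big_cons.
have P_ge0 : 0 <= \prod_(j <- r) (1 + b j) by apply: prodr_ge0 => j _; rewrite addr_ge0.
have S_ge0 : 0 <= \sum_(j <- r) b j by apply: sumr_ge0.
move: IH P_ge0 S_ge0; set P := \prod_(j <- r) _; set S := \sum_(j <- r) _ => IH P_ge0 S_ge0.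
have bi_ge0 := b_ge0 i.
have : 0 <= b i * P * S by rewrite !mulr_ge0.
have : 0 <= b i * b i * P by rewrite !mulr_ge0.
nra.
Qed.

Lemma prod1D_le_1D2sum {R : realFieldType} {I : Type} (r : seq I) (b : I -> R) :
  (forall i, 0 <= b i) -> \sum_(i <- r) b i <= 2^-1 ->
  \prod_(i <- r) (1 + b i) <= 1 + 2 * \sum_(i <- r) b i.
Proof.
move=> b_ge0 small_sum; have := prod1D_mul_1Bsum_le1 r b b_ge0.
have : 0 <= \prod_(j <- r) (1 + b j) by apply: prodr_ge0 => j _; rewrite addr_ge0.
have : 0 <= \sum_(j <- r) b j by apply: sumr_ge0.
move: small_sum; set P := \prod_(j <- r) _; set S := \sum_(j <- r) _ => small_sum S_ge0 P_ge0 h.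
have : P <= 2 by nra.
nra.
Qed.

Lemma sum_invsqr_ge {R : realFieldType} (a : R) K : 2 <= a ->
  \sum_(n < K | a <= n%:R) (n%:R ^+ 2)^-1
    <= (a - 1)^-1 - (Num.max a K%:R - 1)^-1.
Proof.
move=> a_ge2; elim: K => [|K IH]; first by rewrite big_ord0 max_l ?subrr //; lra.
rewrite big_mkcond big_ord_recr -big_mkcond /=.
case: (lerP a K%:R) => aK.
- rewrite max_r // in IH.
  rewrite max_r; last by rewrite -natr1; lra.
  have K_ge2 : 2 <= (K%:R : R) by lra.
  suff : (K%:R ^+ 2 : R)^-1 <= (K%:R - 1)^-1 - (K.+1%:R - 1)^-1.
    by move/(lerD IH); rewrite addrA subrK.
  rewrite -natr1 addrK.
  have -> : (K%:R - 1 : R)^-1 - K%:R^-1 = (K%:R * (K%:R - 1))^-1.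
    by field; apply/andP; split; apply/negP => /eqP; lra.
  rewrite lef_pV2 ?posrE; nra.
- rewrite max_l in IH; last by lra.
  rewrite subrr in IH; rewrite addr0.
  apply: le_trans IH _.
  have a_le_max : a <= Num.max a K.+1%:R by rewrite le_max lexx.
  by rewrite subr_ge0 lef_pV2 ?posrE ?lerD2r //; lra.
Qed.

Lemma sum_invsqr_ge_le {R : realFieldType} (a : R) K : 2 <= a ->
  \sum_(n < K | a <= n%:R) (n%:R ^+ 2)^-1 <= (a - 1)^-1.
Proof.
move=> a_ge2; apply: le_trans (sum_invsqr_ge a K a_ge2) _.
have a_le_max : a <= Num.max a K%:R by rewrite le_max lexx.
have : 0 <= (Num.max a K%:R - 1)^-1 by rewrite invr_ge0; lra.
lra.
Qed.

Lemma sqr_div1Dsqr_le {R : realFieldType} (r : R) :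
  0 <= r -> (r / (1 + r ^+ 2)) ^+ 2 <= r ^+ 2.
Proof.
move=> r_ge0.
have t_le : r / (1 + r ^+ 2) <= r by rewrite ler_pdivrMr; nra.
have t_ge0 : 0 <= r / (1 + r ^+ 2) by rewrite divr_ge0 //; nra.
nra.
Qed.

Section Weights.
Context {R : realType} (x : R).

Definition t_weight (n : nat) : R := t_pp x n 1 ^+ 2 / n%:R.

Lemma t_weight_ge0 n : 0 <= t_weight n.
Proof. by rewrite /t_weight divr_ge0 ?sqr_ge0 ?ler0n. Qed.

Lemma norm_Ssum_term d :
  `|moebius d * t_fun x d ^+ 2 / d%:R| =
    if squarefree d then \prod_(p <- primes d) t_weight p else 0.
Proof.
rewrite /moebius; case: ifP => [sqf_d|_]; last by rewrite !mul0r normr0.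
rewrite -mulrA normrM normrX normrN1 expr1n mul1r ger0_norm; last first.
  by rewrite divr_ge0 ?sqr_ge0 ?ler0n.
rewrite {2}(squarefree_prod_primes d sqf_d) natr_prod.
rewrite /t_fun /multfun -prodrXl -prodf_div; apply: eq_big_seq => p p_d.
by move: sqf_d => /andP [_ /allP /(_ p p_d) /eqP ->].
Qed.

Lemma Ssum_dist1_le y k : 1 <= y ->
  `|Ssum x y k - 1| <= \prod_(i < (Num.truncn y).+1) (1 + t_weight i) - 1.
Proof.
move=> y_ge1; rewrite /Ssum.
have N_gt1 : (1 < (Num.truncn y).+1)%N by rewrite ltnS truncn_gt0.
rewrite big_ltn_cond // coprime1n.
have -> : moebius 1 * t_fun x 1 ^+ 2 / 1%:R = 1 :> R.
  by rewrite /moebius /t_fun /multfun /= big_nil expr1n mulr1 divr1.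
rewrite addrAC subrr add0r lerBrDl.
have bound := sum_squarefree_prod_le (Num.truncn y).+1 _ t_weight_ge0.
rewrite big_ltn_cond //= big_nil in bound; apply: le_trans _ bound; rewrite lerD2l.
apply: le_trans (ler_norm_sum _ _ _) _.
rewrite big_mkcond [leRHS]big_mkcond /=; apply: ler_sum => d _.
rewrite norm_Ssum_term; case: (coprime d k) => //.
by case: (squarefree d) => //; apply: prodr_ge0 => p _; exact: t_weight_ge0.
Qed.

Local Notation lam2 := (lam x ^+ 2).

Lemma t_weight_le n : 2 <= lam2 -> 1 <= ln lam2 ->
  t_weight n <= lam2 / ln lam2 ^+ 2 * (if lam2 <= n%:R then (n%:R ^+ 2)^-1 else 0).
Proof.
move=> lam2_ge2 L_ge1; rewrite /t_weight /t_pp /r_pp eqxx /=.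
case: ifP => [/andP [lam2_le_n _] | _]; last first.
  rewrite mul0r expr0n /= mul0r mulr_ge0 ?divr_ge0 ?sqr_ge0 //.
  by case: ifP; rewrite ?invr_ge0 ?sqr_ge0.
rewrite lam2_le_n.
set L := ln lam2 in L_ge1 *; set nn := (n%:R : R) in lam2_le_n *.
have nn_gt0 : 0 < nn by lra.
have L_le : L <= ln nn by rewrite /L ler_ln ?posrE; lra.
set r := lam x / (Num.sqrt nn * ln nn).
have r_ge0 : 0 <= r by rewrite divr_ge0 ?mulr_ge0 ?sqrtr_ge0 //; lra.
have r2 : r ^+ 2 = lam2 / (nn * ln nn ^+ 2).
  by rewrite /r expr_div_n exprMn (sqr_sqrtr (ltW nn_gt0)).
apply: le_trans (ler_wpM2r _ (sqr_div1Dsqr_le r r_ge0)) _; first by rewrite invr_ge0; lra.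
rewrite r2.
have -> : lam2 / (nn * ln nn ^+ 2) / nn =
    (lam2 / L ^+ 2 * (nn ^+ 2)^-1) * (L ^+ 2 / ln nn ^+ 2).
  by field; apply/and3P; split; apply/negP => /eqP; lra.
rewrite -[leRHS]mulr1; apply: ler_wpM2l.
  by rewrite mulr_ge0 ?invr_ge0 ?divr_ge0 ?sqr_ge0 //; lra.
by rewrite ler_pdivrMr ?mul1r; nra.
Qed.

Lemma sum_t_weight_le N : 2 <= lam2 -> 1 <= ln lam2 ->
  \sum_(i < N) t_weight i <= 2 / ln lam2 ^+ 2.
Proof.
move=> lam2_ge2 L_ge1.
apply: le_trans (ler_sum _ (fun (i : 'I_N) _ => t_weight_le i lam2_ge2 L_ge1)) _.
rewrite -mulr_sumr -big_mkcond /=.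
have lam2_L_ge0 : 0 <= lam2 / ln lam2 ^+ 2 by rewrite divr_ge0 ?sqr_ge0; lra.
apply: le_trans (ler_wpM2l lam2_L_ge0 (sum_invsqr_ge_le _ N lam2_ge2)) _.
rewrite mulrAC ler_wpM2r ?invr_ge0 ?sqr_ge0 // ler_pdivrMr; lra.
Qed.

End Weights.

Lemma lam_sqr_ge {R : realType} (M x : R) :
  1 <= M -> expR (expR M) <= x -> expR M <= lam x ^+ 2.
Proof.
move=> M_ge1 x_ge.
have lnx_ge : expR M <= ln x.
  by rewrite -(expRK (expR M)) ler_ln ?posrE ?expR_gt0 // (lt_le_trans (expR_gt0 _) x_ge).
have lnlnx_ge : M <= ln (ln x).
  by rewrite -(expRK M) ler_ln ?posrE ?expR_gt0 // (lt_le_trans (expR_gt0 _) lnx_ge).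
have expM_gt0 := expR_gt0 M.
rewrite /lam sqr_sqrtr; nra.
Qed.

Theorem mainTheorem13 (R : realType) (eps : R) (heps : 0 < eps) :
  exists X : R, forall x : R, X <= x ->
    forall (y : R) (k : nat), 1 <= y -> (0 < k)%N ->
      `| Ssum x y k - 1 | <= eps.
Proof.
pose M := 2 + 4 / eps.
have M_ge2 : 2 <= M by rewrite /M lerDl divr_ge0 // ltW.
have eps_M : eps * M = 2 * eps + 4 by rewrite /M; field; rewrite lt0r_neq0.
exists (expR (expR M)) => x x_ge y k y_ge1 _; set N := (Num.truncn y).+1.
have M_ge1 : 1 <= M by lra.
have lam2_ge := lam_sqr_ge M x M_ge1 x_ge.
have lam2_ge2 : 2 <= lam x ^+ 2 by have := expR_ge1Dx M; lra.
have L_ge : M <= ln (lam x ^+ 2).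
  by rewrite -(expRK M) ler_ln ?posrE ?expR_gt0 //; lra.
set L := ln (lam x ^+ 2) in L_ge.
have L_ge1 : 1 <= L by lra.
have sum_le := sum_t_weight_le x N lam2_ge2 L_ge1.
have L2_gt0 : 0 < L ^+ 2 by rewrite exprn_gt0 //; lra.
have sum_small : \sum_(i < N) t_weight x i <= 2^-1.
  have L2_ge4 : 4 <= L ^+ 2 by nra.
  by apply: le_trans sum_le _; rewrite ler_pdivrMr // -/L; lra.
apply: le_trans (Ssum_dist1_le x y k y_ge1) _.
rewrite lerBlDl; apply: le_trans
  (prod1D_le_1D2sum _ (fun i : 'I_N => t_weight x i) (fun i => t_weight_ge0 x i) sum_small) _.
rewrite lerD2l; apply: le_trans (ler_wpM2l _ sum_le) _ => //.
rewrite mulrA ler_pdivrMr // -/L.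
have : eps * M <= eps * L by rewrite ler_wpM2l // ltW.
have : eps * L <= eps * L ^+ 2 by rewrite ler_wpM2l ?ltW //; nra.
lra.
Qed.
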